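(* Let $(X,\tau)$ be a $\mathbb{B}$-topological space. Then $(X,\tau)$ is d-sober if and only if every irreducible closed set $\gamma$ of $(X,\tau)$ satisfying (a) for every closed set $\mu$ of $(X,\tau)$ with $\mu(z)\neq0$ for all $z\in X$, either $tt\wedge\gamma\le\mu$ or $ff\wedge\gamma\le\mu$, and (b) for every closed set $\mu$ of $(X,\tau)$ with $\mu(z)\neq1$ for all $z\in X$, $\gamma\not\le\mu$, equals the closure $\overline{1_x}$ for a unique point $x\in X$.
   Context: $\mathbb{B}=\{0,1,tt,ff\}$ is the four-element Boolean algebra with bottom $0$, top $1$, and $tt,ff$ incomparable complements; $\neg$ is its complement, $a\to b=\neg a\vee b$. $\mathbb{B}^X$ has pointwise order/operations; $b_X$ is the constant map $b$; $1_x$ sends $x$ to $1$ and others to $0$; $(b\wedge\lambda)(x)=b\wedge\lambda(x)$; $\lambda[b]=\{x:\lambda(x)\ge b\}$. A $\mathbb{B}$-topology $\tau\subseteq\mathbb{B}^X$ contains all constants and is closed under arbitrary joins and finite meets; $\gamma$ is closed if $\neg\gamma\in\tau$; $\overline{\lambda}$ is the meet of all closed sets above $\lambda$. $(X,\tau)$ is identified with the bitopological space $(X,\tau[tt],\tau[ff])$, $\tau[b]=\{\lambda[b]:\lambda\in\tau\}$. $\mathrm{sub}_X(\lambda,\mu)=\bigwedge_x(\lambda(x)\to\mu(x))$. A closed set $\gamma$ is irreducible if $\mathrm{sub}_X(\gamma,b_X)=b$ for all $b\in\mathbb{B}$ and $\mathrm{sub}_X(\gamma,\mu_1\vee\mu_2)=\mathrm{sub}_X(\gamma,\mu_1)\vee\mathrm{sub}_X(\gamma,\mu_2)$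 for all closed $\mu_1,\mu_2$. A d-point of $(X,\tau[tt],\tau[ff])$ is a pair of frame homomorphisms $p_{tt}\colon\tau[tt]\to\{0,1\}$, $p_{ff}\colon\tau[ff]\to\{0,1\}$ such that: if $U\in\tau[tt]$, $V\in\tau[ff]$, $U\cap V=\emptyset$ then $p_{tt}(U)=0$ or $p_{ff}(V)=0$; and if $U\cup V=X$ then $p_{tt}(U)=1$ or $p_{ff}(V)=1$. Each $x$ gives the d-point $[x]$ with $[x]_{tt}(U)=1\iff x\in U$, $[x]_{ff}(V)=1\iff x\in V$. The space is d-sober if every d-point is $[x]$ for a unique $x$. *)

(* The four-element Boolean algebra B = {0,1,tt,ff} is
   represented as bool * bool with the componentwise order:
   0 = (false,false), 1 = (true,true), tt = (true,false), ff = (false,true). *)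
From Stdlib Require Import Bool ClassicalEpsilon.

Definition B := (bool * bool)%type.
Definition B0 : B := (false, false).
Definition B1 : B := (true, true).
Definition Btt : B := (true, false).
Definition Bff : B := (false, true).

Definition Ble (a b : B) : Prop := (implb (fst a) (fst b) && implb (snd a) (snd b)) = true.
Definition Bmeet (a b : B) : B := (fst a && fst b, snd a && snd b).
Definition Bjoin (a b : B) : B := (fst a || fst b, snd a || snd b).
Definition Bneg (a : B) : B := (negb (fst a), negb (snd a)).
Definition Bimp (a b : B) : B := Bjoin (Bneg a) b.

Definition pb (P : Prop) : bool :=
  if excluded_middle_informative P then true else false.

Definition Bsup (P : B -> Prop) : B :=
  (pb (exists b, P b /\ fst b = true), pb (exists b, P b /\ snd b = true)).
Definition Binf (P : B -> Prop) : B :=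
  (pb (forall b, P b -> fst b = true), pb (forall b, P b -> snd b = true)).

Section BSets.
Variable X : Type.

Definition Bset := X -> B.
Definition constB (b : B) : Bset := fun _ => b.
Definition oneB (x : X) : Bset := fun y => if pb (y = x) then B1 else B0.
Definition leF (l m : Bset) : Prop := forall x, Ble (l x) (m x).
Definition meetF (l m : Bset) : Bset := fun x => Bmeet (l x) (m x).
Definition joinF (l m : Bset) : Bset := fun x => Bjoin (l x) (m x).
Definition negF (l : Bset) : Bset := fun x => Bneg (l x).
Definition cmeet (b : B) (l : Bset) : Bset := fun x => Bmeet b (l x).
Definition supF (S : Bset -> Prop) : Bset :=
  fun x => Bsup (fun b => exists l, S l /\ l x = b).

Definition Btopology (tau : Bset -> Prop) : Prop :=
  (forall b, tau (constB b)) /\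
  (forall S : Bset -> Prop, (forall l, S l -> tau l) -> tau (supF S)) /\
  (forall l m, tau l -> tau m -> tau (meetF l m)).

Definition Bclosed (tau : Bset -> Prop) (g : Bset) : Prop := tau (negF g).

Definition Bclosure (tau : Bset -> Prop) (l : Bset) : Bset :=
  fun x => Binf (fun b => exists g, Bclosed tau g /\ leF l g /\ g x = b).

Definition subX (l m : Bset) : B := Binf (fun b => exists x, b = Bimp (l x) (m x)).

Definition irreducible (tau : Bset -> Prop) (g : Bset) : Prop :=
  Bclosed tau g /\
  (forall b, subX g (constB b) = b) /\
  (forall m1 m2, Bclosed tau m1 -> Bclosed tau m2 ->
     subX g (joinF m1 m2) = Bjoin (subX g m1) (subX g m2)).

Definition setT : X -> Prop := fun _ => True.
Definition setI (U V : X -> Prop) : X -> Prop := fun x => U x /\ V x.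
Definition bigcup (S : (X -> Prop) -> Prop) : X -> Prop := fun x => exists U, S U /\ U x.

(* lambda[b] and tau[b] (as a family of subsets, up to extensional equality) *)
Definition cut (l : Bset) (b : B) : X -> Prop := fun x => Ble b (l x).
Definition opens (tau : Bset -> Prop) (b : B) (U : X -> Prop) : Prop :=
  exists l, tau l /\ forall x, U x <-> cut l b x.

Definition frame_hom (O : (X -> Prop) -> Prop) (p : (X -> Prop) -> bool) : Prop :=
  p setT = true /\
  (forall U V, O U -> O V -> p (setI U V) = p U && p V) /\
  (forall S, (forall U, S U -> O U) -> (p (bigcup S) = true <-> exists U, S U /\ p U = true)).

Definition dpoint (tau : Bset -> Prop) (ptt pff : (X -> Prop) -> bool) : Prop :=
  frame_hom (opens tau Btt) ptt /\ frame_hom (opens tau Bff) pff /\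
  (forall U V, opens tau Btt U -> opens tau Bff V ->
     (forall x, ~ (U x /\ V x)) -> ptt U = false \/ pff V = false) /\
  (forall U V, opens tau Btt U -> opens tau Bff V ->
     (forall x, U x \/ V x) -> ptt U = true \/ pff V = true).

(* the d-point [x], compared with (ptt, pff) as maps on the frames *)
Definition is_point_of (tau : Bset -> Prop) (ptt pff : (X -> Prop) -> bool) (x : X) : Prop :=
  (forall U, opens tau Btt U -> ptt U = pb (U x)) /\
  (forall V, opens tau Bff V -> pff V = pb (V x)).

Definition dsober (tau : Bset -> Prop) : Prop :=
  forall ptt pff, dpoint tau ptt pff -> exists! x, is_point_of tau ptt pff x.

End BSets.

Arguments constB {X}. Arguments oneB {X}. Arguments leF {X}. Arguments meetF {X}.
Arguments joinF {X}. Arguments negF {X}. Arguments cmeet {X}. Arguments supF {X}.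
Arguments Btopology {X}. Arguments Bclosed {X}. Arguments Bclosure {X}.
Arguments subX {X}. Arguments irreducible {X}. Arguments cut {X}. Arguments opens {X}.
Arguments frame_hom {X}. Arguments dpoint {X}. Arguments is_point_of {X}.
Arguments dsober {X}.

(* A d-point (p_tt, p_ff) is recovered from the closed B-set g whose tt- and ff-layers are
   the complements of the unions of the opens killed by p_tt and p_ff; conversely a closed g
   gives the pair of maps "U meets the corresponding layer of g". Irreducibility of g is
   exactly what makes these maps frame homomorphisms, and passing between a pair of opens
   (U, V) and the closed set with layers X \ U and X \ V turns the two d-point conditions
   into (a) and (b). Under this correspondence the d-point [x] is the closure of 1_x. *)
From Stdlib Require Import Bool Classical ClassicalEpsilon FunctionalExtensionality
  PropExtensionality.

(* Coordinate [true] of an element of B is its tt-component, coordinate [false] its ff-component. *)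
Definition proj (i : bool) (v : B) : bool := if i then fst v else snd v.
Definition bi (i : bool) : B := if i then Btt else Bff.

Lemma pb_true (P : Prop) : pb P = true <-> P.
Proof.
  unfold pb; destruct (excluded_middle_informative P) as [p | n]; split; intro H;
    auto; try discriminate; contradiction.
Qed.

Lemma B_ext (a b : B) : (forall i, proj i a = proj i b) -> a = b.
Proof. destruct a, b; intro H; f_equal; [apply (H true) | apply (H false)]. Qed.

Lemma Ble_iff (a b : B) : Ble a b <-> forall i, proj i a = true -> proj i b = true.
Proof.
  unfold Ble; rewrite andb_true_iff, !implb_true_iff. split.
  - intros [H1 H2] [|]; assumption.
  - intro H; split; [apply (H true) | apply (H false)].
Qed.

Lemma proj_bi i j : proj j (bi i) = eqb i j.
Proof. destruct i, j; reflexivity. Qed.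

Lemma Ble_bi i v : Ble (bi i) v <-> proj i v = true.
Proof.
  rewrite Ble_iff. split.
  - intro H; apply H; rewrite proj_bi; apply eqb_reflx.
  - intros H j; rewrite proj_bi; intro E; apply eqb_prop in E; subst j; exact H.
Qed.

Lemma proj_meet i a b : proj i (Bmeet a b) = proj i a && proj i b.
Proof. destruct i; reflexivity. Qed.
Lemma proj_join i a b : proj i (Bjoin a b) = proj i a || proj i b.
Proof. destruct i; reflexivity. Qed.
Lemma proj_neg i a : proj i (Bneg a) = negb (proj i a).
Proof. destruct i; reflexivity. Qed.

Lemma Bsup_proj i P : proj i (Bsup P) = true <-> exists b, P b /\ proj i b = true.
Proof. destruct i; apply pb_true. Qed.
Lemma Binf_proj i P : proj i (Binf P) = true <-> forall b, P b -> proj i b = true.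
Proof. destruct i; apply pb_true. Qed.

Lemma negF_involutive {X : Type} (l : X -> B) : negF (negF l) = l.
Proof.
  apply functional_extensionality; intro x; unfold negF, Bneg.
  destruct (l x); simpl; rewrite !negb_involutive; reflexivity.
Qed.

Lemma subX_proj {X : Type} i (l m : X -> B) :
  proj i (subX l m) = true <-> forall x, proj i (l x) = true -> proj i (m x) = true.
Proof.
  unfold subX, Bimp; rewrite Binf_proj. split.
  - intros H x Hl. specialize (H _ (ex_intro _ x eq_refl)).
    rewrite proj_join, proj_neg, Hl in H. exact H.
  - intros H b [x ->]. rewrite proj_join, proj_neg.
    destruct (proj i (l x)) eqn:E; simpl; auto.
Qed.

Lemma leF_cmeet_bi {X : Type} i (g mu : X -> B) :
  leF (cmeet (bi i) g) mu <-> forall y, proj i (g y) = true -> proj i (mu y) = true.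
Proof.
  unfold leF, cmeet. split.
  - intros H y Hy. apply (proj1 (Ble_iff _ _) (H y) i).
    rewrite proj_meet, proj_bi, eqb_reflx. exact Hy.
  - intros H y. apply Ble_iff; intro j. rewrite proj_meet, proj_bi.
    destruct (eqb i j) eqn:E; simpl; [apply eqb_prop in E; subst j; apply H | discriminate].
Qed.

Definition glue {X : Type} (l : bool -> X -> B) : X -> B :=
  fun z => (fst (l true z), snd (l false z)).

Lemma proj_glue {X : Type} (l : bool -> X -> B) i z : proj i (glue l z) = proj i (l i z).
Proof. destruct i; reflexivity. Qed.

Section BTopology.

Context {X : Type} (tau : (X -> B) -> Prop) (Htau : Btopology tau).

Lemma tau_meet_const b l : tau l -> tau (meetF (constB b) l).
Proof. intro Hl; apply Htau; [apply Htau | exact Hl]. Qed.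

Lemma tau_glue (l : bool -> X -> B) : (forall i, tau (l i)) -> tau (glue l).
Proof.
  intro Hl.
  set (S := fun k => k = meetF (constB (bi true)) (l true) \/ k = meetF (constB (bi false)) (l false)).
  replace (glue l) with (supF S).
  { apply Htau; intros k [-> | ->]; apply tau_meet_const, Hl. }
  apply functional_extensionality; intro z; apply B_ext; intro i.
  apply eq_true_iff_eq. unfold supF; rewrite Bsup_proj, proj_glue. split.
  - intros [b [[k [[-> | ->] <-]] Hb]]; unfold meetF, constB in Hb;
      rewrite proj_meet, proj_bi in Hb; apply andb_true_iff in Hb as [Hi Hk];
      destruct i; try discriminate; exact Hk.
  - intro H. exists (meetF (constB (bi i)) (l i) z). split.
    + exists (meetF (constB (bi i)) (l i)); split; [destruct i; [left | right] |]; reflexivity.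
    + unfold meetF, constB; rewrite proj_meet, proj_bi, eqb_reflx; exact H.
Qed.

Lemma opens_iff i U :
  opens tau (bi i) U <-> exists l, tau l /\ forall x, U x <-> proj i (l x) = true.
Proof.
  unfold opens, cut. split; intros [l [Hl HU]]; exists l; split; auto;
    intro x; rewrite HU, Ble_bi; reflexivity.
Qed.

Lemma opens_of_tau i l : tau l -> opens tau (bi i) (fun z => proj i (l z) = true).
Proof. intro Hl; apply opens_iff; exists l; split; [exact Hl | reflexivity]. Qed.

Lemma opens_compl_closed i g : Bclosed tau g -> opens tau (bi i) (fun z => proj i (g z) = false).
Proof.
  intro Hg; apply opens_iff; exists (negF g); split; [exact Hg |].
  intro x; unfold negF; rewrite proj_neg, negb_true_iff; reflexivity.
Qed.

Lemma opens_setI i U V :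
  opens tau (bi i) U -> opens tau (bi i) V -> opens tau (bi i) (setI X U V).
Proof.
  rewrite !opens_iff; intros [l [Hl HU]] [m [Hm HV]]. exists (meetF l m). split.
  - apply Htau; assumption.
  - intro x; unfold setI, meetF; rewrite HU, HV, proj_meet, andb_true_iff; reflexivity.
Qed.

Lemma opens_setT i : opens tau (bi i) (setT X).
Proof.
  apply opens_iff; exists (constB B1); split; [apply Htau |].
  intro x; destruct i; split; reflexivity.
Qed.

Lemma closed_negF l : tau l -> Bclosed tau (negF l).
Proof. intro Hl; unfold Bclosed; rewrite negF_involutive; exact Hl. Qed.

Lemma closed_of_opens U V : opens tau Btt U -> opens tau Bff V ->
  exists mu, Bclosed tau mu /\ U = (fun z => proj true (mu z) = false)
                            /\ V = (fun z => proj false (mu z) = false).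
Proof.
  intros HU HV.
  apply (opens_iff true) in HU as [l1 [Hl1 HU]]; apply (opens_iff false) in HV as [l2 [Hl2 HV]].
  set (l := fun i : bool => if i then l1 else l2).
  exists (negF (glue l)). split; [|split].
  - apply closed_negF, tau_glue; intros [|]; assumption.
  - apply functional_extensionality; intro z; apply propositional_extensionality.
    unfold negF; rewrite proj_neg, proj_glue, negb_false_iff; apply HU.
  - apply functional_extensionality; intro z; apply propositional_extensionality.
    unfold negF; rewrite proj_neg, proj_glue, negb_false_iff; apply HV.
Qed.

Lemma closure_oneB_proj i x y :
  proj i (Bclosure tau (oneB x) y) = true <-> forall U, opens tau (bi i) U -> U y -> U x.
Proof.
  unfold Bclosure; rewrite Binf_proj. split.
  - intros H U HU Hy. apply opens_iff in HU as [l [Hl HU]]. apply NNPP; intro Hx.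
    set (k := meetF (constB (bi i)) l).
    assert (Hk : Bclosed tau (negF k)) by apply closed_negF, tau_meet_const, Hl.
    assert (Habove : leF (oneB x) (negF k)).
    { intro z; unfold oneB. destruct (pb (z = x)) eqn:Ez; [| reflexivity].
      rewrite pb_true in Ez; subst z. apply Ble_iff; intros j _.
      unfold k, negF, meetF, constB; rewrite proj_neg, proj_meet, proj_bi.
      destruct (eqb i j) eqn:Eij; [| reflexivity].
      apply eqb_prop in Eij; subst j. rewrite HU in Hx.
      apply not_true_is_false in Hx; rewrite Hx; reflexivity. }
    specialize (H _ (ex_intro _ (negF k) (conj Hk (conj Habove eq_refl)))).
    unfold k, negF, meetF, constB in H; rewrite proj_neg, proj_meet, proj_bi, eqb_reflx in H.
    apply HU in Hy; rewrite Hy in H; discriminate.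
  - intros H b [g [Hg [Hle <-]]]. apply NNPP; intro Hn; apply not_true_is_false in Hn.
    pose proof (H _ (opens_compl_closed i g Hg) Hn) as Hx; cbv beta in Hx.
    specialize (Hle x); unfold oneB in Hle.
    rewrite (proj2 (pb_true (x = x)) eq_refl), Ble_iff in Hle.
    rewrite (Hle i) in Hx; [discriminate | destruct i; reflexivity].
Qed.

Definition meets (g : X -> B) (i : bool) (U : X -> Prop) : bool :=
  pb (exists y, proj i (g y) = true /\ U y).

Definition is_support (p : bool -> (X -> Prop) -> bool) (g : X -> B) : Prop :=
  forall i U, opens tau (bi i) U -> (p i U = true <-> exists y, proj i (g y) = true /\ U y).

Lemma meets_is_support g : is_support (meets g) g.
Proof. intros i U _; apply pb_true. Qed.

Lemma is_support_compl p g mu i : is_support p g -> Bclosed tau mu ->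
  p i (fun z => proj i (mu z) = false) = false <->
  forall y, proj i (g y) = true -> proj i (mu y) = true.
Proof.
  intros Hsupp Hmu. rewrite <- not_true_iff_false, (Hsupp i _ (opens_compl_closed i mu Hmu)).
  split.
  - intros Hn y Hy. apply NNPP; intro Hmy. apply Hn; exists y.
    split; [exact Hy | apply not_true_is_false; exact Hmy].
  - intros H [y [Hy Hmy]]. rewrite (H y Hy) in Hmy; discriminate.
Qed.

Lemma point_layer_iff p g i x : Bclosed tau g -> is_support p g ->
  (forall U, opens tau (bi i) U -> p i U = pb (U x)) <->
  (forall y, proj i (g y) = proj i (Bclosure tau (oneB x) y)).
Proof.
  intros Hg Hsupp. split.
  - intros H y. apply eq_true_iff_eq; rewrite closure_oneB_proj. split.
    + intros Hy U HU HUy. apply pb_true. rewrite <- (H U HU). apply Hsupp; eauto.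
    + intro Hy. apply NNPP; intro Hn; apply not_true_is_false in Hn.
      pose proof (opens_compl_closed i g Hg) as HV.
      assert (HpV : p i (fun z => proj i (g z) = false) = true)
        by (rewrite (H _ HV); apply pb_true; exact (Hy _ HV Hn)).
      apply Hsupp in HpV as [z [Hz Hz']]; [congruence | exact HV].
  - intros H U HU. apply eq_true_iff_eq; rewrite pb_true, (Hsupp i U HU). split.
    + intros [y [Hy HUy]]. rewrite H, closure_oneB_proj in Hy. exact (Hy U HU HUy).
    + intro Hx. exists x. split; [rewrite H, closure_oneB_proj; auto | exact Hx].
Qed.

Lemma is_point_of_iff_closure p g x : Bclosed tau g -> is_support p g ->
  is_point_of tau (p true) (p false) x <-> g = Bclosure tau (oneB x).
Proof.
  intros Hg Hsupp. unfold is_point_of.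
  rewrite (point_layer_iff p g true x Hg Hsupp), (point_layer_iff p g false x Hg Hsupp). split.
  - intros [Htt Hff]. apply functional_extensionality; intro y; apply B_ext; intros [|]; auto.
  - intros ->; split; reflexivity.
Qed.

Lemma irreducible_layer_inhabited g i : irreducible tau g -> exists y, proj i (g y) = true.
Proof.
  intros [_ [Hconst _]]. apply NNPP; intro Hn.
  assert (H0 : proj i (subX g (constB B0)) = true)
    by (apply subX_proj; intros y Hy; exfalso; eauto).
  rewrite Hconst in H0; destruct i; discriminate.
Qed.

Lemma irreducible_meets_setI g i U V : irreducible tau g ->
  opens tau (bi i) U -> opens tau (bi i) V ->
  meets g i U = true -> meets g i V = true -> meets g i (setI X U V) = true.
Proof.
  intros [_ [_ Hjoin]] HU HV HgU HgV.
  apply opens_iff in HU as [l1 [Hl1 HU]]; apply opens_iff in HV as [l2 [Hl2 HV]].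
  apply pb_true in HgU as [y1 [Hy1 HUy1]]; apply pb_true in HgV as [y2 [Hy2 HVy2]].
  apply pb_true, NNPP; intro Hn.
  assert (Hsub : proj i (subX g (joinF (negF l1) (negF l2))) = true).
  { apply subX_proj; intros x Hx. unfold joinF, negF; rewrite proj_join, !proj_neg.
    destruct (proj i (l1 x)) eqn:E1, (proj i (l2 x)) eqn:E2; try reflexivity.
    exfalso; apply Hn; exists x; split; [exact Hx | split; [apply HU | apply HV]; assumption]. }
  rewrite Hjoin, proj_join in Hsub by (apply closed_negF; assumption).
  apply orb_true_iff in Hsub as [Hs | Hs]; rewrite subX_proj in Hs; unfold negF in Hs.
  - specialize (Hs y1 Hy1); rewrite proj_neg, (proj1 (HU y1) HUy1) in Hs; discriminate.
  - specialize (Hs y2 Hy2); rewrite proj_neg, (proj1 (HV y2) HVy2) in Hs; discriminate.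
Qed.

Lemma meets_frame_hom g i : irreducible tau g -> frame_hom (opens tau (bi i)) (meets g i).
Proof.
  intro Hg. split; [|split].
  - destruct (irreducible_layer_inhabited g i Hg) as [y Hy].
    apply pb_true; exists y; split; [exact Hy | exact I].
  - intros U V HU HV. apply eq_true_iff_eq; rewrite andb_true_iff. split.
    + intro H; apply pb_true in H as [y [Hy [HUy HVy]]]; split; apply pb_true; eauto.
    + intros [HgU HgV]; exact (irreducible_meets_setI g i U V Hg HU HV HgU HgV).
  - intros S _. unfold meets; rewrite pb_true. split.
    + intros [y [Hy [U [HSU HUy]]]]; exists U; split; [exact HSU | apply pb_true; eauto].
    + intros [U [HSU HU]]; apply pb_true in HU as [y [Hy HUy]].
      exists y; split; [exact Hy | exists U; auto].
Qed.

Definition support (p : bool -> (X -> Prop) -> bool) : X -> B :=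
  let inside i y := pb (forall U, opens tau (bi i) U -> U y -> p i U = true) in
  fun y => (inside true y, inside false y).

Lemma support_proj p i y :
  proj i (support p y) = true <-> forall U, opens tau (bi i) U -> U y -> p i U = true.
Proof. destruct i; apply pb_true. Qed.

Lemma support_closed p : Bclosed tau (support p).
Proof.
  set (null i := supF (fun l => tau l /\ p i (fun z => proj i (l z) = true) = false)).
  unfold Bclosed; replace (negF (support p)) with (glue null).
  { apply tau_glue; intro i; apply Htau; intros l [Hl _]; exact Hl. }
  apply functional_extensionality; intro y; apply B_ext; intro i.
  unfold negF; rewrite proj_glue, proj_neg. apply eq_true_iff_eq.
  rewrite negb_true_iff, <- not_true_iff_false, support_proj.
  unfold null, supF; rewrite Bsup_proj. split.
  - intros [b [[l [[Hl Hpl] <-]] Hly]] Hall.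
    rewrite (Hall _ (opens_of_tau i l Hl) Hly) in Hpl; discriminate.
  - intro Hn. apply not_all_ex_not in Hn as [U Hn].
    apply imply_to_and in Hn as [HU Hn]; apply imply_to_and in Hn as [HUy HpU].
    apply opens_iff in HU as [l [Hl HUl]].
    assert (EU : U = fun z => proj i (l z) = true)
      by (apply functional_extensionality; intro z; apply propositional_extensionality, HUl).
    subst U. exists (l y). split; [exists l; split; [split; [exact Hl |] |] |].
    + apply not_true_is_false; exact HpU.
    + reflexivity.
    + exact HUy.
Qed.

(* The layer of the support is the complement of the union of the opens killed by p, so an
   open U with p U = true but missing that layer would be covered by killed opens. *)
Lemma support_is_support p :
  (forall i, frame_hom (opens tau (bi i)) (p i)) -> is_support p (support p).
Proof.
  intros Hfh i U HU. destruct (Hfh i) as [_ [Hmeet Hjoin]]. split.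
  - intro HpU. apply NNPP; intro Hn.
    set (S := fun W => exists U', opens tau (bi i) U' /\ p i U' = false /\ W = setI X U U').
    assert (HS : forall W, S W -> opens tau (bi i) W)
      by (intros W [U' [HU' [_ ->]]]; apply opens_setI; assumption).
    assert (EU : U = bigcup X S).
    { apply functional_extensionality; intro z; apply propositional_extensionality. split.
      - intro Hz. assert (Hgz : ~ proj i (support p z) = true) by (intro Hgz; apply Hn; eauto).
        rewrite support_proj in Hgz. apply not_all_ex_not in Hgz as [U' Hgz].
        apply imply_to_and in Hgz as [HU' Hgz]; apply imply_to_and in Hgz as [HzU' HpU'].
        exists (setI X U U'). split; [| split; assumption].
        exists U'; split; [exact HU' | split; [apply not_true_is_false; exact HpU' | reflexivity]].
      - intros [W [[U' [_ [_ ->]]] [Hz _]]]; exact Hz. }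
    rewrite EU in HpU; apply (Hjoin S HS) in HpU as [W [[U' [HU' [HpU' ->]]] HW]].
    rewrite Hmeet, HpU', andb_false_r in HW by assumption; discriminate.
  - intros [y [Hy HUy]]. rewrite support_proj in Hy; exact (Hy U HU HUy).
Qed.

Lemma irreducible_of_support p g : (forall i, frame_hom (opens tau (bi i)) (p i)) ->
  Bclosed tau g -> is_support p g -> irreducible tau g.
Proof.
  intros Hfh Hg Hsupp. split; [exact Hg | split].
  - intro b. apply B_ext; intro i. apply eq_true_iff_eq; rewrite subX_proj; unfold constB.
    destruct (proj1 (Hsupp i _ (opens_setT i)) (proj1 (Hfh i))) as [y [Hy _]].
    split; [intro H; exact (H y Hy) | intros H _ _; exact H].
  - intros m1 m2 Hm1 Hm2. apply B_ext; intro i. apply eq_true_iff_eq.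
    rewrite proj_join, orb_true_iff, !subX_proj. split.
    + intro Hsub. apply NNPP; intro Hn; apply not_or_and in Hn as [N1 N2].
      assert (P1 : p i (fun z => proj i (m1 z) = false) = true)
        by (apply not_false_is_true; intro E; apply N1, (is_support_compl p g m1 i Hsupp Hm1), E).
      assert (P2 : p i (fun z => proj i (m2 z) = false) = true)
        by (apply not_false_is_true; intro E; apply N2, (is_support_compl p g m2 i Hsupp Hm2), E).
      destruct (Hfh i) as [_ [Hmeet _]].
      assert (P12 : p i (setI X (fun z => proj i (m1 z) = false)
                                (fun z => proj i (m2 z) = false)) = true)
        by (rewrite Hmeet, P1, P2 by (apply opens_compl_closed; assumption); reflexivity).
      apply Hsupp in P12 as [y [Hy [E1 E2]]]; [| apply opens_setI; apply opens_compl_closed; assumption].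
      specialize (Hsub y Hy); unfold joinF in Hsub.
      rewrite proj_join, E1, E2 in Hsub; discriminate.
    + intros [H | H] y Hy; unfold joinF; rewrite proj_join, (H y Hy); [reflexivity | apply orb_true_r].
Qed.

Definition dpoint_disjoint (p : bool -> (X -> Prop) -> bool) : Prop :=
  forall U V, opens tau Btt U -> opens tau Bff V ->
    (forall x, ~ (U x /\ V x)) -> p true U = false \/ p false V = false.

Definition dpoint_cover (p : bool -> (X -> Prop) -> bool) : Prop :=
  forall U V, opens tau Btt U -> opens tau Bff V ->
    (forall x, U x \/ V x) -> p true U = true \/ p false V = true.

Definition nowhere_zero_condition (g : X -> B) : Prop :=
  forall mu, Bclosed tau mu -> (forall z, mu z <> B0) ->
    leF (cmeet Btt g) mu \/ leF (cmeet Bff g) mu.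

Definition nowhere_one_condition (g : X -> B) : Prop :=
  forall mu, Bclosed tau mu -> (forall z, mu z <> B1) -> ~ leF g mu.

Lemma dpoint_disjoint_iff p g : is_support p g -> dpoint_disjoint p <-> nowhere_zero_condition g.
Proof.
  intro Hsupp. split.
  - intros Hd mu Hmu Hne.
    assert (Hdisj : forall z, ~ (proj true (mu z) = false /\ proj false (mu z) = false)).
    { intros z [E1 E2]; apply (Hne z); destruct (mu z); simpl in *; subst; reflexivity. }
    destruct (Hd _ _ (opens_compl_closed true mu Hmu) (opens_compl_closed false mu Hmu) Hdisj)
      as [H | H]; [left | right];
      exact (proj2 (leF_cmeet_bi _ g mu) (proj1 (is_support_compl p g mu _ Hsupp Hmu) H)).
  - intros Ha U V HU HV Hdisj.
    destruct (closed_of_opens U V HU HV) as [mu [Hmu [-> ->]]].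
    assert (Hne : forall z, mu z <> B0) by (intros z E; apply (Hdisj z); rewrite E; split; reflexivity).
    destruct (Ha mu Hmu Hne) as [H | H]; [left | right];
      apply (is_support_compl p g mu _ Hsupp Hmu);
      [exact (proj1 (leF_cmeet_bi true g mu) H) | exact (proj1 (leF_cmeet_bi false g mu) H)].
Qed.

Lemma dpoint_cover_iff p g : is_support p g -> dpoint_cover p <-> nowhere_one_condition g.
Proof.
  intro Hsupp. split.
  - intros Hc mu Hmu Hne Hle.
    assert (Hcov : forall z, proj true (mu z) = false \/ proj false (mu z) = false).
    { intro z; destruct (mu z) as [[|] [|]] eqn:E; simpl; auto; exfalso; exact (Hne z E). }
    assert (Hlayer : forall i y, proj i (g y) = true -> proj i (mu y) = true)
      by (intros i y; revert i; apply Ble_iff, Hle).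
    destruct (Hc _ _ (opens_compl_closed true mu Hmu) (opens_compl_closed false mu Hmu) Hcov)
      as [H | H]; rewrite (proj2 (is_support_compl p g mu _ Hsupp Hmu) (Hlayer _)) in H;
      discriminate.
  - intros Hb U V HU HV Hcov.
    destruct (closed_of_opens U V HU HV) as [mu [Hmu [-> ->]]].
    assert (Hne : forall z, mu z <> B1)
      by (intros z E; destruct (Hcov z) as [Hz | Hz]; cbv beta in Hz; rewrite E in Hz; discriminate).
    apply NNPP; intro Hn; apply not_or_and in Hn as [N1 N2].
    apply (Hb mu Hmu Hne). intro y; apply Ble_iff; intro i; revert y.
    apply (is_support_compl p g mu i Hsupp Hmu).
    destruct i; apply not_true_is_false; assumption.
Qed.

End BTopology.

Theorem mainTheorem10 (X : Type) (tau : (X -> B) -> Prop) (Htau : Btopology tau) :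
  dsober tau <->
  (forall g : X -> B,
     irreducible tau g ->
     (forall mu, Bclosed tau mu -> (forall z, mu z <> B0) ->
        leF (cmeet Btt g) mu \/ leF (cmeet Bff g) mu) ->
     (forall mu, Bclosed tau mu -> (forall z, mu z <> B1) -> ~ leF g mu) ->
     exists! x : X, g = Bclosure tau (oneB x)).
Proof.
  split.
  - intros Hsober g Hirr Ha Hb.
    pose proof (meets_is_support tau g) as Hsupp.
    assert (Hdp : dpoint tau (meets g true) (meets g false)).
    { split; [| split; [| split]]; try (apply meets_frame_hom; exact Hirr).
      - exact (proj2 (dpoint_disjoint_iff tau Htau _ _ Hsupp) Ha).
      - exact (proj2 (dpoint_cover_iff tau Htau _ _ Hsupp) Hb). }
    destruct (Hsober _ _ Hdp) as [x [Hx Huniq]]. exists x. split.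
    + exact (proj1 (is_point_of_iff_closure tau Htau _ _ x (proj1 Hirr) Hsupp) Hx).
    + intros y Hy. apply Huniq, (is_point_of_iff_closure tau Htau _ _ y (proj1 Hirr) Hsupp), Hy.
  - intros H ptt pff [Htt [Hff [Hdisj Hcov]]].
    set (p := fun i : bool => if i then ptt else pff).
    assert (Hfh : forall i, frame_hom (opens tau (bi i)) (p i)) by (intros [|]; assumption).
    pose proof (support_is_support tau Htau p Hfh) as Hsupp.
    pose proof (support_closed tau Htau p) as Hg.
    destruct (H (support tau p)) as [x [Hx Huniq]].
    + exact (irreducible_of_support tau Htau p _ Hfh Hg Hsupp).
    + exact (proj1 (dpoint_disjoint_iff tau Htau p _ Hsupp) Hdisj).
    + exact (proj1 (dpoint_cover_iff tau Htau p _ Hsupp) Hcov).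
    + exists x. split.
      * exact (proj2 (is_point_of_iff_closure tau Htau p _ x Hg Hsupp) Hx).
      * intros y Hy. apply Huniq, (is_point_of_iff_closure tau Htau p _ y Hg Hsupp), Hy.
Qed.
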